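(* Let $n,d\ge1$ and let $W$ be a word over a totally ordered alphabet. If $W$ contains $n$ pairwise non-overlapping occurrences of the same word $u$ of length $nd$, then $W$ is $(n,d)$-reducible.
   Context: A subword is a contiguous factor. Two words $u,v$ are comparable if neither is a prefix of the other; for comparable $u,v$ write $u\succ v$ if at the first position where they differ the letter of $u$ is larger. $W$ is $n$-divisible if it contains a subword $u_1\cdots u_n$ with nonempty $u_i$ and $u_1\succ\dots\succ u_n$. $W$ is $(n,d)$-reducible if it is $n$-divisible or contains a subword $u^d$ with $u$ nonempty. *)

From mathcomp Require Import all_boot all_order.
Set Implicit Arguments. Unset Strict Implicit. Unset Printing Implicit Defensive.
Import Order.TTheory.

Section Words.
Variables (disp : Order.disp_t) (T : orderType disp).

Definition comparable_w (u v : seq T) : bool := ~~ prefix u v && ~~ prefix v u.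

Fixpoint first_diff_gt (u v : seq T) : bool :=
  match u, v with
  | x :: u', y :: v' => if x == y then first_diff_gt u' v' else (y < x)%O
  | _, _ => false
  end.

Definition succ_w (u v : seq T) : bool := comparable_w u v && first_diff_gt u v.

Definition n_divisible (n : nat) (W : seq T) : Prop :=
  exists us : seq (seq T),
    [/\ size us = n, all (fun u => u != [::]) us, sorted succ_w us
      & infix (flatten us) W].

Definition nd_reducible (n d : nat) (W : seq T) : Prop :=
  n_divisible n W \/
  exists u : seq T, u != [::] /\ infix (flatten (nseq d u)) W.

Definition occurs_at (u W : seq T) (i : nat) : bool :=
  (i + size u <= size W) && (take (size u) (drop i W) == u).

End Words.

From mathcomp Require Import all_boot all_order.
From mathcomp Require Import zify.
Set Implicit Arguments. Unset Strict Implicit. Unset Printing Implicit Defensive.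
Import Order.TTheory.

(* Consider the suffixes u_i = drop i u for i < n.  If some u_j is a prefix of
   u_i with i < j, then u_i has period j - i and, as its length nd - i is at
   least (j - i) d, it starts with a d-th power.  Otherwise the u_i are pairwise
   comparable; sort them decreasingly as u_(s_1) > ... > u_(s_n) and cut W at
   p_k + s_k, where p_1 < ... < p_n are the disjoint occurrences of u.  The k-th
   piece starts with u_(s_k), hence the pieces decrease as well. *)

Lemma sorted_strict (S : eqType) (R : rel S) (s : seq S) :
  sorted (fun a b => (a == b) || R a b) s -> uniq s -> sorted R s.
Proof.
case: s => //= x s; elim: s x => [|y s IH] x //= /andP[Rxy path_s] /andP[x_notin uniq_s].
rewrite in_cons negb_or in x_notin; case/andP: x_notin => /negbTE x_neq_y _.
by rewrite x_neq_y /= in Rxy; rewrite Rxy IH.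
Qed.

Lemma path_gap_le_last (N x : nat) (s : seq nat) :
  path (fun i j => i + N <= j) x s -> x <= last x s.
Proof. by elim: s x => [|y s IH] x //= /andP[gap /IH]; apply: leq_trans; lia. Qed.

Section Factors.
Variable S : eqType.
Implicit Types u v w : seq S.

Lemma prefix_size u v : prefix u v -> size u <= size v.
Proof. by case/prefixP=> r ->; rewrite size_cat leq_addr. Qed.

Lemma prefix_of_common_prefix u v w :
  prefix u w -> prefix v w -> size u <= size v -> prefix u v.
Proof.
by rewrite !prefixE => /eqP pre_u /eqP pre_v le_uv; rewrite -pre_v take_takel // pre_u.
Qed.

Lemma size_flatten_nseq k w : size (flatten (nseq k w)) = k * size w.
Proof. by rewrite size_flatten /shape map_nseq sumn_nseq mulnC. Qed.

Lemma prefix_power_of_period w p k :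
  prefix (drop p w) w -> k * p <= size w -> prefix (flatten (nseq k (take p w))) w.
Proof.
move=> period; elim: k => [|k IH] le_kp; first exact: prefix0s.
have le_p : p <= size w by apply: leq_trans le_kp; rewrite mulSn leq_addr.
rewrite /= -[X in prefix _ X](cat_take_drop p w) prefix_catr // eqxx /=.
apply: prefix_of_common_prefix (IH _) period _; first by move: le_kp; rewrite mulSn; lia.
by rewrite size_flatten_nseq size_takel // size_drop; move: le_kp; rewrite mulSn; lia.
Qed.

Lemma nested_suffixes_power u n d i j : 0 < d -> size u = n * d -> i < j < n ->
  prefix (drop j u) (drop i u) -> exists2 v, v != [::] & infix (flatten (nseq d v)) u.
Proof.
move=> d_gt0 size_u /andP[lt_ij lt_jn] nested.
exists (take (j - i) (drop i u)).
  by rewrite -size_eq0 size_take_min size_drop size_u; nia.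
apply: (prefix_infix_trans _ (suffixW (suffix_drop u i))).
apply: prefix_power_of_period; first by rewrite drop_drop subnK // ltnW.
by rewrite size_drop size_u; nia.
Qed.

Definition slice (W : seq S) (a b : nat) := take (b - a) (drop a W).

Lemma slice_infix W a b : infix (slice W a b) W.
Proof. exact: prefix_infix_trans (prefix_take _ _) (infix_drop _ _). Qed.

Lemma slice_cat W a b c : a <= b <= c -> slice W a b ++ slice W b c = slice W a c.
Proof.
rewrite /slice => /andP[le_ab le_bc]; have -> : c - a = (b - a) + (c - b) by lia.
by rewrite takeD drop_drop subnK.
Qed.

End Factors.

Section Words.
Variables (disp : Order.disp_t) (T : orderType disp).
Implicit Types u v w : seq T.

Local Notation fdg := (@first_diff_gt disp T).

Lemma first_diff_gt_prefix u v a b : fdg u v -> prefix u a -> prefix v b -> fdg a b.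
Proof.
move=> + /prefixP[r ->] /prefixP[r' ->].
by elim: u v => [|x u IH] [|y v] //=; case: ifP => // _ /IH.
Qed.

Lemma first_diff_gt_comparable u v : fdg u v -> comparable_w u v.
Proof.
rewrite /comparable_w; elim: u v => [|x u IH] [|y v] //=.
by case: (eqVneq x y) => [_|//] /IH.
Qed.

Lemma comparable_first_diff_gt u v : comparable_w u v -> fdg u v || fdg v u.
Proof.
rewrite /comparable_w; elim: u v => [|x u IH] [|y v] //=.
case: (eqVneq x y) => [_|neq_xy] /=; first exact: IH.
by case: ltgtP neq_xy.
Qed.

Lemma comparable_suffixes u i j : i < j < size u ->
  ~~ prefix (drop j u) (drop i u) -> comparable_w (drop i u) (drop j u).
Proof.
case/andP=> lt_ij lt_ju not_prefix; rewrite /comparable_w not_prefix andbT.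
by apply/negP => /prefix_size; rewrite !size_drop leqNgt ltn_sub2l // (ltn_trans lt_ij).
Qed.

Lemma decreasing_suffix_order u (s : seq nat) : uniq s ->
  {in s &, forall i j, i < j -> comparable_w (drop i u) (drop j u)} ->
  exists2 t, perm_eq t s & sorted (fun i j => fdg (drop i u) (drop j u)) t.
Proof.
move=> uniq_s comp; pose R i j := (i == j) || fdg (drop i u) (drop j u).
have R_total : {in s &, total R}.
  move=> i j si sj; rewrite /R; case: ltngtP => [lt_ij|lt_ji|->]; rewrite ?eqxx //=.
    exact: comparable_first_diff_gt (comp _ _ si sj lt_ij).
  by rewrite orbC; apply: comparable_first_diff_gt (comp _ _ sj si lt_ji).
exists (sort R s); first exact/permPl/perm_sort.
by apply: sorted_strict; [exact: (sort_sorted_in R_total (allss s)) | rewrite sort_uniq].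
Qed.

Lemma occurs_at_infix u W p : occurs_at u W p -> infix u W.
Proof.
by case/andP=> _ /eqP <-; exact: prefix_infix_trans (prefix_take _ _) (infix_drop _ _).
Qed.

Lemma occurs_at_slice u W p s : occurs_at u W p -> s <= size u ->
  slice W (p + s) (p + size u) = drop s u.
Proof.
case/andP=> _ /eqP occ le_s.
by rewrite -[in RHS]occ /slice subnDl addnC -drop_drop take_drop subnK.
Qed.

Lemma occurrences_factorization u W p0 ps s0 ss : size ps = size ss ->
  all (occurs_at u W) (p0 :: ps) -> path (fun i j => i + size u <= j) p0 ps ->
  all (fun s => s < size u) (s0 :: ss) ->
  path (fun i j => fdg (drop i u) (drop j u)) s0 ss ->
  exists us, [/\ size us = (size ps).+1, all (fun v => v != [::]) us,
    sorted (@succ_w disp T) us, flatten us = slice W (p0 + s0) (last p0 ps + size u)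
    & prefix (drop s0 u) (head [::] us)].
Proof.
have nonempty s : s < size u -> drop s u != [::].
  by rewrite -size_eq0 size_drop subn_eq0 -ltnNge.
elim: ps p0 s0 ss => [|p1 ps IH] p0 s0 [|s1 ss] //= size_ps.
  case/andP=> occ0 _ _ /andP[lt_s0 _] _.
  exists [:: drop s0 u].
  by rewrite /= cats0 (occurs_at_slice occ0 (ltnW lt_s0)) ?nonempty ?prefix_refl.
case/andP=> occ0 occs /andP[gap01 gaps] /andP[lt_s0 lt_ss] /andP[gt01 gts].
have [us [size_us nonempty_us sorted_us flatten_us head_us]] :=
  IH p1 s1 ss (succn_inj size_ps) occs gaps lt_ss gts.
have le_last := path_gap_le_last gaps.
have piece0 : slice W (p0 + s0) (p1 + s1) =
    drop s0 u ++ slice W (p0 + size u) (p1 + s1).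
  by rewrite -(occurs_at_slice occ0 (ltnW lt_s0)) slice_cat //; lia.
exists (slice W (p0 + s0) (p1 + s1) :: us); split => /=.
- by rewrite size_us.
- by rewrite nonempty_us andbT piece0; case: (drop s0 u) (nonempty _ lt_s0).
- case: us {size_us nonempty_us flatten_us} sorted_us head_us => //= v us -> head_v.
  have gt_v : fdg (slice W (p0 + s0) (p1 + s1)) v.
    by apply: first_diff_gt_prefix gt01 _ head_v; rewrite piece0 prefix_prefix.
  by rewrite /succ_w gt_v first_diff_gt_comparable.
- by rewrite flatten_us slice_cat //; lia.
- by rewrite piece0 prefix_prefix.
Qed.

End Words.

Theorem lemmac (disp : Order.disp_t) (T : orderType disp) (n d : nat)
  (W u : seq T) :
  0 < n -> 0 < d -> size u = n * d ->
  (exists ps : seq nat,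
     [/\ size ps = n, all (occurs_at u W) ps
       & sorted (fun i j => i + size u <= j) ps]) ->
  nd_reducible n d W.
Proof.
move=> n_gt0 d_gt0 size_u [[|p0 ps] [size_ps occs gaps]].
  by rewrite -size_ps in n_gt0.
have n_le_u : n <= size u by rewrite size_u leq_pmulr.
case: (boolP [exists j : 'I_n, exists i : 'I_j, prefix (drop j u) (drop i u)]).
  case/existsP=> j /existsP[i nested]; right.
  have lt_ijn : i < j < n by rewrite !ltn_ord.
  have [v v_nonempty v_power] := nested_suffixes_power d_gt0 size_u lt_ijn nested.
  exists v; split => //; case/andP: occs => /occurs_at_infix u_in_W _.
  exact: infix_trans v_power u_in_W.
move=> no_nested; left.
have comp : {in iota 0 n &, forall i j, i < j -> comparable_w (drop i u) (drop j u)}.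
  move=> i j; rewrite !mem_iota /= => _ lt_jn lt_ij.
  apply: comparable_suffixes; first by rewrite lt_ij (leq_trans lt_jn n_le_u).
  apply: contra no_nested => nested.
  by apply/existsP; exists (Ordinal lt_jn); apply/existsP; exists (Ordinal lt_ij).
have [[|s0 ss] perm_t sorted_t] := decreasing_suffix_order (iota_uniq 0 n) comp.
  by move/perm_size: perm_t; rewrite size_iota => n0; rewrite -n0 in n_gt0.
have shifts_lt : all (fun s => s < size u) (s0 :: ss).
  by apply/allP => s; rewrite (perm_mem perm_t) mem_iota; lia.
have size_ss : size ps = size ss.
  by move/perm_size: perm_t; rewrite size_iota -size_ps => -[].
have [us [size_us nonempty_us sorted_us flatten_us _]] :=
  occurrences_factorization size_ss occs gaps shifts_lt sorted_t.
by exists us; split; rewrite ?size_us ?flatten_us ?slice_infix.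
Qed.
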